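(* Let $M$ be a partial multiplication matrix and let $\pi^\#\in\mathsf{Grid}^\#(M)$. Then $\pi^\#$ is $M$-indivisible if and only if its orientation digraph $D_{\pi^\#}$ is strongly connected.
   Context: A gridding matrix has entries in $\{0,1,-1\}$; an $m\times n$ one has $m$ columns, $n$ rows, $M_{ij}$ in column $i$ from the left and row $j$ from the bottom. An $M$-gridding of a permutation $\pi$ of length $L$ is a choice of vertical lines $\tfrac12=v_0\le\dots\le v_m=L+\tfrac12$ and horizontal lines $\tfrac12=h_0\le\dots\le h_n=L+\tfrac12$, not through points of $\pi$, such that in each cell $C_{ij}=\{v_{i-1}<x<v_i,\ h_{j-1}<y<h_j\}$ the points of $\pi$ are absent if $M_{ij}=0$, increasing if $M_{ij}=1$, decreasing if $M_{ij}=-1$. $\mathsf{Grid}^\#(M)$ is the set of $M$-gridded permutations. $M$ is a partial multiplication matrix: there are fixed $c_1,\dots,c_m,r_1,\dots,r_n\in\{\pm1\}$ with $M_{ij}=c_ir_j$ for each non-zero entry. Column $i$ is oriented left-to-right if $c_i=1$, right-to-left otherwise; row $j$ bottom-to-top if $r_j=1$, top-to-bottom otherwise. The orientation digraph $D_{\pi^\#}$ has the points of $\pi^\#$ as vertices, with $x\to y$ whenever $x,y$ lie in a common column of cells and $x$ precedes $y$ in that column's orientation, or in a common row of cells and $x$ precedes $y$ in that row's orientation. $M$-sum: for $M$-gridded $\sigma^\#,\tau^\#$, $\sigma^\#\boxplus\tau^\#$ is the $M$-gridded permutation whose points are those of $\sigma^\#$ and $\tau^\#$, each in the cell it occupied,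 with the relative order (in position and value) among points of $\sigma^\#$ and among points of $\tau^\#$ unchanged, and such that in every column of cells all points of $\sigma^\#$ precede all points of $\tau^\#$ in the column's orientation and in every row of cells all points of $\sigma^\#$ precede all points of $\tau^\#$ in the row's orientation. (Equivalently: place $\sigma^\#$ in the first copy and $\tau^\#$ in the second copy of $M$ inside the doubled matrix $M^{\times2}$ and delete odd-numbered grid lines.) $\pi^\#$ is $M$-divisible if $\pi^\#=\sigma^\#\boxplus\tau^\#$ with $\sigma^\#,\tau^\#$ non-empty, and $M$-indivisible otherwise. *)

From Stdlib Require Import Arith ZArith Relations.
Open Scope Z_scope.
Open Scope nat_scope.

(* A gridded permutation: points (x, perm x) for 0 <= x < len (0-indexed).
   A vertical line is an integer cut c in {0..len}: point x lies left of it iff x < c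
   (i.e. the line sits at c + 1/2 in 1-indexed coordinates).  vl 0 .. vl m are the
   vertical lines, hl 0 .. hl n the horizontal lines (on values). *)
Record gperm := mkG { len : nat; perm : nat -> nat; vl : nat -> nat; hl : nat -> nat }.

Definition in_col (g : gperm) (i x : nat) : Prop := vl g i <= x < vl g (S i).
Definition in_row (g : gperm) (j x : nat) : Prop := hl g j <= perm g x < hl g (S j).
Definition in_cell (g : gperm) (i j x : nat) : Prop := in_col g i x /\ in_row g j x.

(* M : column index i < m, row index j < n (row 0 at the bottom). *)
Definition gridded (m n : nat) (M : nat -> nat -> Z) (g : gperm) : Prop :=
  (forall x, x < len g -> perm g x < len g) /\
  (forall x y, x < len g -> y < len g -> perm g x = perm g y -> x = y) /\
  vl g 0 = 0 /\ vl g m = len g /\ (forall i, i < m -> vl g i <= vl g (S i)) /\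
  hl g 0 = 0 /\ hl g n = len g /\ (forall j, j < n -> hl g j <= hl g (S j)) /\
  (forall i j x, i < m -> j < n -> x < len g -> in_cell g i j x -> M i j <> 0%Z) /\
  (forall i j x y, i < m -> j < n -> x < len g -> y < len g ->
     in_cell g i j x -> in_cell g i j y -> x < y ->
     (M i j = 1%Z -> perm g x < perm g y) /\ (M i j = (-1)%Z -> perm g y < perm g x)).

Definition prec (s : Z) (a b : nat) : Prop :=
  (s = 1%Z /\ a < b) \/ (s = (-1)%Z /\ b < a).

Definition orient_edge (m n : nat) (c r : nat -> Z) (g : gperm) (x y : nat) : Prop :=
  x < len g /\ y < len g /\
  ((exists i, i < m /\ in_col g i x /\ in_col g i y /\ prec (c i) x y) \/
   (exists j, j < n /\ in_row g j x /\ in_row g j y /\ prec (r j) (perm g x) (perm g y))).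

Definition strongly_connected (m n : nat) (c r : nat -> Z) (g : gperm) : Prop :=
  forall x y, x < len g -> y < len g ->
    clos_refl_trans nat (orient_edge m n c r g) x y.

(* p = s (+)_M t : the points of p are the (images under f of the) points of s
   and the (images under e of the) points of t, each in the cell it occupied,
   relative order (positions and values) within s and within t unchanged, and in
   every column/row all points of s precede all points of t in its orientation. *)
Definition msum (m n : nat) (c r : nat -> Z) (p s t : gperm) : Prop :=
  exists f e : nat -> nat,
    len p = len s + len t /\
    (forall a, a < len s -> f a < len p) /\
    (forall b, b < len t -> e b < len p) /\
    (forall a a', a < len s -> a' < len s -> f a = f a' -> a = a') /\
    (forall b b', b < len t -> b' < len t -> e b = e b' -> b = b') /\
    (forall a b, a < len s -> b < len t -> f a <> e b) /\
    (forall a i, a < len s -> i < m -> (in_col s i a <-> in_col p i (f a))) /\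
    (forall a j, a < len s -> j < n -> (in_row s j a <-> in_row p j (f a))) /\
    (forall b i, b < len t -> i < m -> (in_col t i b <-> in_col p i (e b))) /\
    (forall b j, b < len t -> j < n -> (in_row t j b <-> in_row p j (e b))) /\
    (forall a a', a < len s -> a' < len s ->
       (a < a' <-> f a < f a') /\ (perm s a < perm s a' <-> perm p (f a) < perm p (f a'))) /\
    (forall b b', b < len t -> b' < len t ->
       (b < b' <-> e b < e b') /\ (perm t b < perm t b' <-> perm p (e b) < perm p (e b'))) /\
    (forall a b, a < len s -> b < len t ->
       (forall i, i < m -> in_col p i (f a) -> in_col p i (e b) -> prec (c i) (f a) (e b)) /\
       (forall j, j < n -> in_row p j (f a) -> in_row p j (e b) ->
          prec (r j) (perm p (f a)) (perm p (e b)))).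

Definition indivisible (m n : nat) (M : nat -> nat -> Z) (c r : nat -> Z) (p : gperm) : Prop :=
  ~ exists s t, gridded m n M s /\ gridded m n M t /\ 0 < len s /\ 0 < len t /\
                msum m n c r p s t.

From Stdlib Require Import Arith ZArith Bool Relations Lia.
From Stdlib Require Import Classical ClassicalEpsilon FinFun.

(** If a point x of pi# cannot reach a point y in the orientation digraph, let
    P be the set of points that can reach y.  No edge enters P from outside, so
    in every column and every row all points of P precede all other points in
    the orientation; restricting pi# to P and to its complement therefore
    exhibits pi# as their M-sum.  Conversely, in an M-sum every edge leaving a
    point of the second summand ends in the second summand, so no point of it
    reaches a point of the first. *)

Fixpoint count_below (Q : nat -> bool) (k : nat) : nat :=
  match k with 0 => 0 | S k' => count_below Q k' + (if Q k' then 1 else 0) end.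

Section CountBelow.

Variable Q : nat -> bool.

Lemma count_below_mono k k' : k <= k' -> count_below Q k <= count_below Q k'.
Proof. induction 1; simpl; lia. Qed.

Lemma count_below_step u : Q u = true -> count_below Q u < count_below Q (S u).
Proof. intros HQ. simpl. rewrite HQ. lia. Qed.

Lemma count_below_pos k u : u < k -> Q u = true -> 0 < count_below Q k.
Proof.
  intros Hu HQ. pose proof (count_below_step u HQ). pose proof (count_below_mono (S u) k Hu). lia.
Qed.

Lemma count_below_false k : (forall u, u < k -> Q u = false) -> count_below Q k = 0.
Proof.
  induction k as [|k IH]; simpl; intros H; [reflexivity|].
  rewrite IH, H; auto.
Qed.

Lemma count_below_compl k : count_below Q k + count_below (fun u => negb (Q u)) k = k.
Proof. induction k as [|k IH]; simpl; [lia|]. destruct (Q k); simpl; lia. Qed.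

Lemma count_below_attained k a :
  a < count_below Q k -> exists u, u < k /\ Q u = true /\ count_below Q u = a.
Proof.
  induction k as [|k IH]; simpl; intros Ha; [lia|].
  destruct (lt_dec a (count_below Q k)) as [Hlt|Hge].
  - destruct (IH Hlt) as (u & Hu & HQ & Hcount). exists u; auto.
  - destruct (Q k) eqn:HQ; [exists k; split; [lia|split; [exact HQ|lia]] | lia].
Qed.

End CountBelow.

Lemma count_below_sub (Q R : nat -> bool) k :
  (forall u, u < k -> Q u = true -> R u = true) -> count_below Q k <= count_below R k.
Proof.
  induction k as [|k IH]; simpl; intros H; [lia|].
  specialize (IH (fun u Hu => H u ltac:(lia))).
  destruct (Q k) eqn:HQ; [rewrite (H k ltac:(lia) HQ)|destruct (R k)]; lia.
Qed.

Lemma count_below_sub_lt (Q R : nat -> bool) k u0 :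
  (forall u, u < k -> Q u = true -> R u = true) ->
  u0 < k -> R u0 = true -> Q u0 = false -> count_below Q k < count_below R k.
Proof.
  induction k as [|k IH]; simpl; intros H Hu0 HR HQ; [lia|].
  destruct (Nat.eq_dec u0 k) as [->|Hne].
  - rewrite HR, HQ. pose proof (count_below_sub Q R k (fun u Hu => H u ltac:(lia))). lia.
  - specialize (IH (fun u Hu => H u ltac:(lia)) ltac:(lia) HR HQ).
    destruct (Q k) eqn:HQk; [rewrite (H k ltac:(lia) HQk)|destruct (R k)]; lia.
Qed.

Lemma count_below_ext (Q R : nat -> bool) k :
  (forall u, u < k -> Q u = R u) -> count_below Q k = count_below R k.
Proof.
  induction k as [|k IH]; simpl; intros H; [reflexivity|].
  rewrite IH, H; auto.
Qed.

Lemma monotone_step_cmp (F : nat -> nat) x :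
  (forall a b, a <= b -> F a <= F b) -> F x < F (S x) ->
  forall h, (F h <= F x <-> h <= x) /\ (F x < F h <-> x < h).
Proof.
  intros Hmono Hstep h.
  destruct (le_lt_dec h x) as [Hh|Hh]; pose proof (Hmono _ _ Hh); split; split; intros; lia.
Qed.

Lemma count_below_cmp Q u : Q u = true ->
  forall h, (count_below Q h <= count_below Q u <-> h <= u) /\
            (count_below Q u < count_below Q h <-> u < h).
Proof.
  intros HQ. apply monotone_step_cmp; [apply count_below_mono|apply count_below_step; exact HQ].
Qed.

Definition select (Q : nat -> bool) (L a : nat) : nat :=
  epsilon (inhabits 0) (fun u => u < L /\ Q u = true /\ count_below Q u = a).

Section Select.

Variables (Q : nat -> bool) (L : nat).

Lemma select_spec a : a < count_below Q L ->
  select Q L a < L /\ Q (select Q L a) = true /\ count_below Q (select Q L a) = a.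
Proof. intros Ha. unfold select. apply epsilon_spec, count_below_attained, Ha. Qed.

Lemma select_inj a a' : a < count_below Q L -> a' < count_below Q L ->
  select Q L a = select Q L a' -> a = a'.
Proof.
  intros Ha Ha' E.
  destruct (select_spec a Ha) as (_ & _ & Hc). destruct (select_spec a' Ha') as (_ & _ & Hc').
  rewrite <- Hc, <- Hc', E. reflexivity.
Qed.

Lemma select_lt_iff a a' : a < count_below Q L -> a' < count_below Q L ->
  (a < a' <-> select Q L a < select Q L a').
Proof.
  intros Ha Ha'.
  destruct (select_spec a Ha) as (_ & HQ & Hc). destruct (select_spec a' Ha') as (_ & _ & Hc').
  destruct (count_below_cmp _ _ HQ (select Q L a')) as [_ Hcmp].
  rewrite Hc, Hc' in Hcmp. exact Hcmp.
Qed.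

End Select.

Definition count_val_below (p : gperm) (Q : nat -> bool) (w : nat) : nat :=
  count_below (fun u => Q u && (perm p u <? w)) (len p).

Section CountValBelow.

Variables (p : gperm) (Q : nat -> bool).

Lemma count_val_below_mono w w' : w <= w' -> count_val_below p Q w <= count_val_below p Q w'.
Proof.
  intros Hw. apply count_below_sub. intros u _ Hu.
  apply andb_prop in Hu as [HQ Hlt]. apply Nat.ltb_lt in Hlt.
  rewrite HQ. apply Nat.ltb_lt. lia.
Qed.

Lemma count_val_below_cmp u : u < len p -> Q u = true ->
  forall h, (count_val_below p Q h <= count_val_below p Q (perm p u) <-> h <= perm p u) /\
            (count_val_below p Q (perm p u) < count_val_below p Q h <-> perm p u < h).
Proof.
  intros Hu HQ. apply monotone_step_cmp; [apply count_val_below_mono|].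
  apply (count_below_sub_lt _ _ _ u); auto.
  - intros v _ Hv. apply andb_prop in Hv as [HQv Hlt]. apply Nat.ltb_lt in Hlt.
    rewrite HQv. apply Nat.ltb_lt. lia.
  - rewrite HQ. apply Nat.ltb_lt. lia.
  - rewrite HQ. apply Nat.ltb_ge. lia.
Qed.

Lemma count_val_below_0 : count_val_below p Q 0 = 0.
Proof. apply count_below_false. intros u _. rewrite andb_false_r. reflexivity. Qed.

Lemma count_val_below_len : (forall x, x < len p -> perm p x < len p) ->
  count_val_below p Q (len p) = count_below Q (len p).
Proof.
  intros Hrange. apply count_below_ext. intros u Hu.
  rewrite (proj2 (Nat.ltb_lt _ _) (Hrange u Hu)). apply andb_true_r.
Qed.

End CountValBelow.

(** The points of [p] satisfying [Q], positions and values renumbered by rank;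
    each grid line is moved to the number of selected points before it. *)
Definition restrict (p : gperm) (Q : nat -> bool) : gperm :=
  mkG (count_below Q (len p))
      (fun a => count_val_below p Q (perm p (select Q (len p) a)))
      (fun i => count_below Q (vl p i))
      (fun j => count_val_below p Q (hl p j)).

Section Restrict.

Variables (p : gperm) (Q : nat -> bool).

Local Notation sel := (select Q (len p)).

Lemma restrict_in_col i a : a < len (restrict p Q) ->
  (in_col (restrict p Q) i a <-> in_col p i (sel a)).
Proof.
  intros Ha. destruct (select_spec _ _ _ Ha) as (_ & HQ & Hc). unfold in_col; simpl.
  destruct (count_below_cmp _ _ HQ (vl p i)) as [Hlo _].
  destruct (count_below_cmp _ _ HQ (vl p (S i))) as [_ Hhi].
  rewrite Hc in Hlo, Hhi. tauto.
Qed.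

Lemma restrict_in_row j a : a < len (restrict p Q) ->
  (in_row (restrict p Q) j a <-> in_row p j (sel a)).
Proof.
  intros Ha. destruct (select_spec _ _ _ Ha) as (Hlt & HQ & _). unfold in_row; simpl.
  destruct (count_val_below_cmp p Q _ Hlt HQ (hl p j)) as [Hlo _].
  destruct (count_val_below_cmp p Q _ Hlt HQ (hl p (S j))) as [_ Hhi]. tauto.
Qed.

Lemma restrict_in_cell i j a : a < len (restrict p Q) ->
  (in_cell (restrict p Q) i j a <-> in_cell p i j (sel a)).
Proof.
  intros Ha. unfold in_cell. rewrite restrict_in_col, restrict_in_row by exact Ha. tauto.
Qed.

Lemma restrict_lt_val a a' : a < len (restrict p Q) ->
  (perm (restrict p Q) a < perm (restrict p Q) a' <-> perm p (sel a) < perm p (sel a')).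
Proof.
  intros Ha. destruct (select_spec _ _ _ Ha) as (Hlt & HQ & _).
  exact (proj2 (count_val_below_cmp p Q _ Hlt HQ _)).
Qed.

Lemma restrict_gridded m n M : gridded m n M p -> gridded m n M (restrict p Q).
Proof.
  intros (Hrange & Hinj & Hv0 & Hvm & Hvmono & Hh0 & Hhn & Hhmono & Hcell & Hord).
  assert (Hsel : forall a, a < len (restrict p Q) -> sel a < len p)
    by (intros a Ha; exact (proj1 (select_spec _ _ _ Ha))).
  unfold gridded; simpl. repeat match goal with |- _ /\ _ => split end.
  - intros a Ha. destruct (select_spec _ _ _ Ha) as (Hlt & HQ & _).
    rewrite <- (count_val_below_len p Q Hrange). apply count_val_below_cmp; auto.
  - intros a a' Ha Ha' E.
    destruct (lt_eq_lt_dec (perm p (sel a)) (perm p (sel a'))) as [[Hlt|Heq]|Hlt].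
    + apply (restrict_lt_val a a' Ha) in Hlt. simpl in Hlt. lia.
    + exact (select_inj _ _ _ _ Ha Ha' (Hinj _ _ (Hsel a Ha) (Hsel a' Ha') Heq)).
    + apply (restrict_lt_val a' a Ha') in Hlt. simpl in Hlt. lia.
  - rewrite Hv0. reflexivity.
  - rewrite Hvm. reflexivity.
  - intros i Hi. apply count_below_mono, Hvmono, Hi.
  - rewrite Hh0. apply count_val_below_0.
  - rewrite Hhn. apply count_val_below_len, Hrange.
  - intros j Hj. apply count_val_below_mono, Hhmono, Hj.
  - intros i j a Hi Hj Ha Hin. apply restrict_in_cell in Hin; [|exact Ha].
    exact (Hcell i j _ Hi Hj (Hsel a Ha) Hin).
  - intros i j x y Hi Hj Hx Hy Hcx Hcy Hxy.
    apply restrict_in_cell in Hcx; auto. apply restrict_in_cell in Hcy; auto.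
    apply (select_lt_iff _ _ _ _ Hx Hy) in Hxy.
    destruct (Hord i j _ _ Hi Hj (Hsel x Hx) (Hsel y Hy) Hcx Hcy Hxy) as [Hinc Hdec].
    split; intros HM; [apply (restrict_lt_val x y Hx) | apply (restrict_lt_val y x Hy)]; auto.
Qed.

End Restrict.

Lemma prec_total s a b : (s = 1%Z \/ s = (-1)%Z) -> a <> b -> prec s a b \/ prec s b a.
Proof. unfold prec; lia. Qed.

Lemma prec_asym s a b : prec s a b -> prec s b a -> False.
Proof. unfold prec; lia. Qed.

Section SplitAlongCut.

Variables (m n : nat) (c r : nat -> Z) (p : gperm) (Q : nat -> bool).
Hypothesis Hc : forall i, i < m -> c i = 1%Z \/ c i = (-1)%Z.
Hypothesis Hr : forall j, j < n -> r j = 1%Z \/ r j = (-1)%Z.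
Hypothesis Hinj : forall x y, x < len p -> y < len p -> perm p x = perm p y -> x = y.
Hypothesis HQpred : forall u v, orient_edge m n c r p v u -> Q u = true -> Q v = true.

Lemma cut_prec_col u v i : u < len p -> v < len p -> Q u = true -> Q v = false -> i < m ->
  in_col p i u -> in_col p i v -> prec (c i) u v.
Proof.
  intros Hu Hv HQu HQv Hi Cu Cv.
  assert (Huv : u <> v) by congruence.
  destruct (prec_total (c i) u v (Hc i Hi) Huv) as [Hpr|Hpr]; [exact Hpr|].
  assert (Q v = true); [|congruence].
  apply (HQpred u v); [|exact HQu]. split; [exact Hv|split; [exact Hu|left; exists i; auto]].
Qed.

Lemma cut_prec_row u v j : u < len p -> v < len p -> Q u = true -> Q v = false -> j < n ->
  in_row p j u -> in_row p j v -> prec (r j) (perm p u) (perm p v).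
Proof.
  intros Hu Hv HQu HQv Hj Ru Rv.
  assert (Huv : perm p u <> perm p v) by (intros E; rewrite (Hinj u v Hu Hv E) in HQu; congruence).
  destruct (prec_total (r j) _ _ (Hr j Hj) Huv) as [Hpr|Hpr]; [exact Hpr|].
  assert (Q v = true); [|congruence].
  apply (HQpred u v); [|exact HQu]. split; [exact Hv|split; [exact Hu|right; exists j; auto]].
Qed.

Lemma msum_restrict_cut : msum m n c r p (restrict p Q) (restrict p (fun u => negb (Q u))).
Proof.
  exists (select Q (len p)), (select (fun u => negb (Q u)) (len p)).
  repeat match goal with |- _ /\ _ => split end.
  - simpl. symmetry. apply count_below_compl.
  - intros a Ha. exact (proj1 (select_spec _ _ _ Ha)).
  - intros b Hb. exact (proj1 (select_spec _ _ _ Hb)).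
  - intros a a'. apply select_inj.
  - intros b b'. apply select_inj.
  - intros a b Ha Hb E.
    destruct (select_spec _ _ _ Ha) as (_ & HQ & _).
    destruct (select_spec _ _ _ Hb) as (_ & HQc & _).
    rewrite <- E, HQ in HQc. discriminate.
  - intros a i Ha _. apply restrict_in_col, Ha.
  - intros a j Ha _. apply restrict_in_row, Ha.
  - intros b i Hb _. apply restrict_in_col, Hb.
  - intros b j Hb _. apply restrict_in_row, Hb.
  - intros a a' Ha Ha'. split; [apply select_lt_iff; auto | apply restrict_lt_val, Ha].
  - intros b b' Hb Hb'. split; [apply select_lt_iff; auto | apply restrict_lt_val, Hb].
  - intros a b Ha Hb.
    destruct (select_spec _ _ _ Ha) as (Hu & HQu & _).
    destruct (select_spec _ _ _ Hb) as (Hv & HQv & _).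
    apply negb_true_iff in HQv.
    split; [intros i Hi | intros j Hj]; intros Hfa Heb.
    + apply cut_prec_col; auto.
    + apply cut_prec_row; auto.
Qed.

End SplitAlongCut.

Lemma disjoint_injections_cover {L ls lt : nat} {f e : nat -> nat} :
  L = ls + lt ->
  (forall a, a < ls -> f a < L) -> (forall b, b < lt -> e b < L) ->
  (forall a a', a < ls -> a' < ls -> f a = f a' -> a = a') ->
  (forall b b', b < lt -> b' < lt -> e b = e b' -> b = b') ->
  (forall a b, a < ls -> b < lt -> f a <> e b) ->
  forall w, w < L -> (exists a, a < ls /\ w = f a) \/ (exists b, b < lt /\ w = e b).
Proof.
  intros HL Hf He Hfi Hei Hfe w Hw.
  pose (g := fun k => if k <? ls then f k else e (k - ls)).
  assert (Hg : bFun L g).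
  { intros k Hk. unfold g. destruct (Nat.ltb_spec k ls); [apply Hf|apply He]; lia. }
  assert (Hginj : bInjective L g).
  { intros k k' Hk Hk'. unfold g.
    destruct (Nat.ltb_spec k ls), (Nat.ltb_spec k' ls); intros E.
    - apply Hfi; auto.
    - exfalso. apply (Hfe k (k' - ls)); auto; lia.
    - exfalso. apply (Hfe k' (k - ls)); auto; lia.
    - apply Hei in E; lia. }
  destruct (proj1 (bInjective_bSurjective Hg) Hginj w Hw) as (k & Hk & E).
  unfold g in E. destruct (Nat.ltb_spec k ls).
  - left. exists k. auto.
  - right. exists (k - ls). split; [lia|auto].
Qed.

Lemma clos_refl_trans_invariant {A : Type} {R : relation A} {P : A -> Prop} {x y : A} :
  (forall u v, R u v -> P u -> P v) -> clos_refl_trans A R x y -> P x -> P y.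
Proof. intros HP Hxy. induction Hxy; eauto. Qed.

Lemma msum_not_strongly_connected {m n c r p s t} :
  msum m n c r p s t -> 0 < len s -> 0 < len t -> ~ strongly_connected m n c r p.
Proof.
  intros (f & e & HL & Hf & He & Hfi & Hei & Hfe & _ & _ & _ & _ & _ & _ & Hcross) Hs Ht HSC.
  pose (in_t := fun w => exists b, b < len t /\ w = e b).
  assert (Hclosed : forall u w, orient_edge m n c r p u w -> in_t u -> in_t w).
  { intros u w (_ & Hw & Hedge) (b & Hb & ->).
    destruct (disjoint_injections_cover HL Hf He Hfi Hei Hfe _ Hw) as [(a & Ha & ->)|Hwt];
      [exfalso|exact Hwt].
    destruct (Hcross a b Ha Hb) as [Hcol Hrow].
    destruct Hedge as [(i & Hi & Cb & Ca & Hpr)|(j & Hj & Rb & Ra & Hpr)];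
      eapply prec_asym; eauto. }
  assert (Hf0 : in_t (f 0)).
  { apply (clos_refl_trans_invariant Hclosed (HSC _ _ (He 0 Ht) (Hf 0 Hs))).
    exists 0. auto. }
  destruct Hf0 as (b & Hb & E). exact (Hfe 0 b Hs Hb E).
Qed.

Lemma divisible_of_not_reachable {m n M c r p x y} :
  (forall i, i < m -> c i = 1%Z \/ c i = (-1)%Z) ->
  (forall j, j < n -> r j = 1%Z \/ r j = (-1)%Z) ->
  gridded m n M p -> x < len p -> y < len p ->
  ~ clos_refl_trans nat (orient_edge m n c r p) x y -> ~ indivisible m n M c r p.
Proof.
  intros Hc Hr Hp Hx Hy Hxy Hind. apply Hind.
  pose (Q := fun u => if excluded_middle_informative
                           (clos_refl_trans nat (orient_edge m n c r p) u y)
                      then true else false).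
  assert (HQ : forall u, Q u = true <-> clos_refl_trans nat (orient_edge m n c r p) u y).
  { intros u. unfold Q. destruct excluded_middle_informative; split; congruence || tauto. }
  assert (HQx : Q x = false) by (destruct (Q x) eqn:E; [apply HQ in E; contradiction|reflexivity]).
  assert (HQy : Q y = true) by (apply HQ, rt_refl).
  exists (restrict p Q), (restrict p (fun u => negb (Q u))).
  split; [apply restrict_gridded, Hp|].
  split; [apply restrict_gridded, Hp|].
  split; [apply (count_below_pos _ _ y Hy HQy)|].
  split; [apply (count_below_pos _ _ x Hx); rewrite HQx; reflexivity|].
  destruct Hp as (_ & Hinj & _).
  apply msum_restrict_cut; auto.
  intros u v Hvu HQu. apply HQ. apply HQ in HQu. exact (rt_trans _ _ _ _ _ (rt_step _ _ _ _ Hvu) HQu).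
Qed.

Theorem lemma3p2 (m n : nat) (M : nat -> nat -> Z) (c r : nat -> Z)
  (HM : forall i j, i < m -> j < n -> M i j = 0%Z \/ M i j = 1%Z \/ M i j = (-1)%Z)
  (Hc : forall i, i < m -> c i = 1%Z \/ c i = (-1)%Z)
  (Hr : forall j, j < n -> r j = 1%Z \/ r j = (-1)%Z)
  (Hmult : forall i j, i < m -> j < n -> M i j <> 0%Z -> M i j = (c i * r j)%Z)
  (p : gperm) (Hp : gridded m n M p) :
  indivisible m n M c r p <-> strongly_connected m n c r p.
Proof.
  split.
  - intros Hind x y Hx Hy. apply NNPP. intros Hxy.
    exact (divisible_of_not_reachable Hc Hr Hp Hx Hy Hxy Hind).
  - intros HSC (s & t & _ & _ & Hs & Ht & Hsum).
    exact (msum_not_strongly_connected Hsum Hs Ht HSC).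
Qed.
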